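(* Let $\{x_i\}_{i\in[N]}$ be the global solution of the delayed consensus system described in the context, let $\beta>0$, and let \[ F(t):=d_x(t)+\beta\int_{\max\{0,t-2\tau\}}^t e^{-(t-s)}\int_s^t\max_{i\in[N]}|\dot x_i(r)|\,\mathrm dr\,\mathrm ds,\qquad t\ge0. \] Let $K$ be the smallest integer such that $K\sigma\ge2\tau$. Then \[ F(t)\le\mathcal{Z}^K_\sigma\Delta^0_x\qquad\text{for all }t\in[0,2\tau], \] where $\mathcal{Z}^K_\sigma:=Z^K_\sigma+Z^{K-1}_\sigma\beta\big(1-(1+2\tau)e^{-2\tau}\big)$.
   Context: Let $N\ge2$, $d\ge1$ be integers, $[N]=\{1,\dots,N\}$, $0\le\sigma\le\tau$. Let $\psi:[0,\infty)\to[0,\infty)$ be continuous, nonincreasing, positive everywhere, with $\sup\psi\le1$. Given $x_i^0\in C([-\tau,0],\mathbb{R}^d)$, $\{x_i\}$ is the global solution (continuous on $[-\tau,\infty)$, continuously differentiable on $[0,\infty)$) of $\dot x_i(t)=\sum_{j\ne i}a_{ij}(t)(x_j(t-\tau)-x_i(t-\sigma))$ for $t>0$, with $a_{ij}(t)=\frac1{N-1}\psi(|x_i(t-\sigma)-x_j(t-\tau)|)$, and $x_i=x_i^0$ on $[-\tau,0]$. $d_x(t):=\max_{i,j}|x_i(t)-x_j(t)|$; $\Delta^0_x:=\max_{i,j}\max_{s,t\in[-\tau,0]}|x_i^0(s)-x_j^0(t)|$. For $k\ge0$, \[ Z^k_\sigma:=\frac{1}{2\sqrt{\sigma(1+\sigma)}}\Big[\big((1+\sigma)+\sqrt{\sigma(1+\sigma)}\big)^{k+1}-\big((1+\sigma)-\sqrt{\sigma(1+\sigma)}\big)^{k+1}\Big],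 \] a polynomial in $\sigma$; equivalently $Z^0_\sigma=1$, $Z^k_\sigma=1+(1+\sigma)Z^{k-1}_\sigma+\sigma\sum_{m=0}^{k-1}Z^m_\sigma$ for $k\ge1$. *)

From Stdlib Require Import Reals List.
From Coquelicot Require Import Coquelicot.
Import ListNotations.
Open Scope R_scope.

(* Vectors of R^d are represented as functions nat -> R; only the
   components k = 0 .. d-1 are meaningful. *)
Definition sumR (l : list R) : R := fold_right Rplus 0 l.

Definition vnorm (d : nat) (v : nat -> R) : R :=
  sqrt (sumR (map (fun k => (v k) ^ 2) (seq 0 d))).

Definition vsub (v w : nat -> R) : nat -> R := fun k => v k - w k.

(* maximum of a list of nonnegative reals (base value 0) *)
Definition maxl (l : list R) : R := fold_right Rmax 0 l.

Definition agents (N : nat) : list nat := seq 1 N.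

(* A configuration: x i t k = k-th component of x_i(t) *)
Definition config := nat -> R -> nat -> R.

Definition diam (N d : nat) (x : config) (t : R) : R :=
  maxl (map (fun i => maxl (map (fun j => vnorm d (vsub (x i t) (x j t)))
                                 (agents N))) (agents N)).

Definition Delta0 (N d : nat) (tau : R) (x : config) : R :=
  real (Lub_Rbar (fun r => exists i j s t,
    (1 <= i <= N)%nat /\ (1 <= j <= N)%nat /\
    -tau <= s <= 0 /\ -tau <= t <= 0 /\
    r = vnorm d (vsub (x i s) (x j t)))).

Definition aw (N d : nat) (psi : R -> R) (sigma tau : R) (x : config)
  (i j : nat) (t : R) : R :=
  psi (vnorm d (vsub (x i (t - sigma)) (x j (t - tau)))) / INR (N - 1).

Definition rhs (N d : nat) (psi : R -> R) (sigma tau : R) (x : config)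
  (i : nat) (t : R) (k : nat) : R :=
  sumR (map (fun j => aw N d psi sigma tau x i j t *
                       (x j (t - tau) k - x i (t - sigma) k))
            (filter (fun j => negb (Nat.eqb j i)) (agents N))).

(* x is a global solution of the delayed consensus system:
   continuous on [-tau, oo), solves the ODE for t > 0 (initial datum is
   x itself restricted to [-tau,0]). *)
Definition is_solution (N d : nat) (psi : R -> R) (sigma tau : R)
  (x : config) : Prop :=
  (forall i k t, (1 <= i <= N)%nat -> (k < d)%nat -> -tau <= t ->
     filterlim (fun u => x i u k) (within (fun u => -tau <= u) (locally t))
               (locally (x i t k))) /\
  (forall i k t, (1 <= i <= N)%nat -> (k < d)%nat -> 0 < t ->
     is_derive (fun u => x i u k) t (rhs N d psi sigma tau x i t k)).

Definition psi_ok (psi : R -> R) : Prop :=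
  (forall r, 0 <= r -> filterlim psi (within (fun u => 0 <= u) (locally r))
                                  (locally (psi r))) /\
  (forall r s, 0 <= r -> r <= s -> psi s <= psi r) /\
  (forall r, 0 <= r -> 0 < psi r) /\
  (forall r, 0 <= r -> psi r <= 1).

Definition vel (x : config) (i : nat) (r : R) : nat -> R :=
  fun k => Derive (fun u => x i u k) r.

Definition Ffun (N d : nat) (beta tau : R) (x : config) (t : R) : R :=
  diam N d x t + beta *
    RInt (fun s => exp (- (t - s)) *
            RInt (fun r => maxl (map (fun i => vnorm d (vel x i r)) (agents N))) s t)
         (Rmax 0 (t - 2 * tau)) t.

(* Z^k_sigma via the recursion Z^0 = 1,
   Z^k = 1 + (1+sigma) Z^{k-1} + sigma * sum_{m=0}^{k-1} Z^m.
   Zpair sigma k = (Z^k, sum_{m=0}^k Z^m). *)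
Fixpoint Zpair (sigma : R) (k : nat) : R * R :=
  match k with
  | O => (1, 1)
  | S k' => let (z, s) := Zpair sigma k' in
            let z' := 1 + (1 + sigma) * z + sigma * s in (z', s + z')
  end.

Definition Zsig (sigma : R) (k : nat) : R := fst (Zpair sigma k).

From Stdlib Require Import Reals List Lia Lra.
From Coquelicot Require Import Coquelicot.
Open Scope R_scope.

(* Write W(b) for the largest distance |x_i(s) - x_j(s')| over agents i, j and
   times s, s' in [-tau, b], so that W(0) = Delta^0_x.  For r in [b, b + sigma]
   both delayed arguments r - tau and r - sigma lie in [-tau, b]; since the
   weights are at most 1/(N-1), every speed |xdot_i(r)| is at most W(b), and the
   mean value theorem moves each agent by at most sigma W(b).  Hence
   W(b + sigma) <= (1 + 2 sigma) W(b) and W(k sigma) <= (1 + 2 sigma)^k Delta^0_x.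
   As K sigma >= 2 tau, on [0, 2 tau] the diameter is bounded by
   (1 + 2 sigma)^K Delta^0_x and the speeds by (1 + 2 sigma)^(K-1) Delta^0_x, and
   integrating the latter against the kernel gives the factor
   1 - (1 + t) e^(-t) <= 1 - (1 + 2 tau) e^(-2 tau).  Finally
   (1 + 2 sigma)^k <= Z^k_sigma. *)

Section ListSums.

Context {A : Type}.

Lemma sumR_map_nonneg (l : list A) (f : A -> R) :
  (forall a, In a l -> 0 <= f a) -> 0 <= sumR (map f l).
Proof.
  induction l as [|a l IH]; simpl; intros H; [lra|].
  assert (0 <= f a) by auto. assert (0 <= sumR (map f l)) by auto. lra.
Qed.

Lemma sumR_map_plus (l : list A) (f g : A -> R) :
  sumR (map (fun a => f a + g a) l) = sumR (map f l) + sumR (map g l).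
Proof. induction l; simpl; lra. Qed.

Lemma sumR_map_minus (l : list A) (f g : A -> R) :
  sumR (map (fun a => f a - g a) l) = sumR (map f l) - sumR (map g l).
Proof. induction l; simpl; lra. Qed.

Lemma sumR_map_scal (l : list A) (c : R) (f : A -> R) :
  sumR (map (fun a => c * f a) l) = c * sumR (map f l).
Proof. induction l; simpl; [|rewrite IHl]; ring. Qed.

Lemma sumR_map_eq0 (l : list A) (f : A -> R) :
  (forall a, In a l -> 0 <= f a) -> sumR (map f l) = 0 -> forall a, In a l -> f a = 0.
Proof.
  induction l as [|b l IH]; simpl; intros Hf H a Ha; [tauto|].
  assert (0 <= f b) by auto.
  assert (0 <= sumR (map f l)) by (apply sumR_map_nonneg; auto).
  destruct Ha as [<-|Ha]; [lra|]. apply IH; auto; lra.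
Qed.

Lemma sumR_map_le_length (l : list A) (f : A -> R) (c : R) :
  (forall a, In a l -> f a <= c) -> sumR (map f l) <= INR (length l) * c.
Proof.
  induction l as [|a l IH]; simpl length; intros H; [simpl; lra|].
  rewrite S_INR. simpl.
  assert (f a <= c) by (apply H; simpl; auto).
  assert (sumR (map f l) <= INR (length l) * c) by (apply IH; intros; apply H; simpl; auto).
  lra.
Qed.

End ListSums.

Lemma maxl_lub (l : list R) (M : R) : 0 <= M -> (forall y, In y l -> y <= M) -> maxl l <= M.
Proof.
  induction l as [|a l IH]; simpl; intros HM H; [lra|].
  apply Rmax_lub; auto.
Qed.

Lemma maxl_ub (l : list R) (y : R) : In y l -> y <= maxl l.
Proof.
  induction l as [|a l IH]; simpl; intros H; [tauto|].
  destruct H as [<-|H]; [apply Rmax_l|].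
  eapply Rle_trans; [apply IH, H|apply Rmax_r].
Qed.

Section EuclideanNorm.

Variable d : nat.

Definition vdot (u v : nat -> R) : R := sumR (map (fun k => u k * v k) (seq 0 d)).

Lemma vnorm_ge0 (v : nat -> R) : 0 <= vnorm d v.
Proof. apply sqrt_pos. Qed.

Lemma vnorm_sqr (v : nat -> R) : vnorm d v * vnorm d v = sumR (map (fun k => v k ^ 2) (seq 0 d)).
Proof. apply sqrt_sqrt, sumR_map_nonneg. intros; apply pow2_ge_0. Qed.

Lemma vnorm_ext (u v : nat -> R) : (forall k, (k < d)%nat -> u k = v k) -> vnorm d u = vnorm d v.
Proof.
  intros H. unfold vnorm. do 2 f_equal. apply map_ext_in.
  intros k Hk. apply in_seq in Hk. rewrite H; auto; lia.
Qed.

Lemma vnorm_eq0 (v : nat -> R) : vnorm d v = 0 -> forall k, (k < d)%nat -> v k = 0.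
Proof.
  intros H k Hk.
  assert (v k ^ 2 = 0).
  { apply (sumR_map_eq0 (seq 0 d) (fun k => v k ^ 2)).
    - intros; apply pow2_ge_0.
    - rewrite <- vnorm_sqr, H. ring.
    - apply in_seq. lia. }
  nra.
Qed.

Lemma vnorm_scal (c : R) (v : nat -> R) : vnorm d (fun k => c * v k) = Rabs c * vnorm d v.
Proof.
  unfold vnorm.
  rewrite (map_ext _ (fun k => (c * c) * v k ^ 2)) by (intros; ring).
  rewrite sumR_map_scal, sqrt_mult_alt by apply Rle_0_sqr.
  rewrite <- sqrt_Rsqr_abs. reflexivity.
Qed.

Lemma vnorm_zero (v : nat -> R) : (forall k, (k < d)%nat -> v k = 0) -> vnorm d v = 0.
Proof.
  intros H. rewrite (vnorm_ext v (fun k => 0 * v k)).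
  - rewrite vnorm_scal, Rabs_R0. ring.
  - intros k Hk. rewrite H; auto; ring.
Qed.

Lemma vdot_le_vnorm (u v : nat -> R) : vdot u v <= vnorm d u * vnorm d v.
Proof.
  set (a := vnorm d u). set (b := vnorm d v).
  assert (Ha : 0 <= a) by apply vnorm_ge0. assert (Hb : 0 <= b) by apply vnorm_ge0.
  destruct (Req_dec (a * b) 0) as [Hab|Hab].
  - assert (Hdot : vdot u v = 0).
    { unfold vdot. rewrite (map_ext_in _ (fun k => 0 * (u k * v k))), sumR_map_scal; [ring|].
      intros k Hk. apply in_seq in Hk.
      destruct (Rmult_integral _ _ Hab) as [H0|H0];
        [rewrite (vnorm_eq0 u H0 k)|rewrite (vnorm_eq0 v H0 k)]; lia || ring. }
    rewrite Hdot, Hab. lra.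
  - (* 0 <= sum_k (b u_k - a v_k)^2 = 2 a b (a b - <u, v>) *)
    assert (Hsq : 0 <= sumR (map (fun k => (b * u k - a * v k) ^ 2) (seq 0 d))).
    { apply sumR_map_nonneg. intros; apply pow2_ge_0. }
    rewrite (map_ext _ (fun k => (b * b) * u k ^ 2 +
                                 ((-2 * a * b) * (u k * v k) + (a * a) * v k ^ 2))) in Hsq
      by (intros; ring).
    rewrite !sumR_map_plus, !sumR_map_scal, <- !vnorm_sqr in Hsq. fold (vdot u v) a b in Hsq.
    assert (0 < a * b) by (destruct Ha, Hb; nra).
    nra.
Qed.

Lemma vnorm_add (u v : nat -> R) : vnorm d (fun k => u k + v k) <= vnorm d u + vnorm d v.
Proof.
  assert (Hsq : vnorm d (fun k => u k + v k) * vnorm d (fun k => u k + v k)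
                = vnorm d u * vnorm d u + 2 * vdot u v + vnorm d v * vnorm d v).
  { rewrite !vnorm_sqr. unfold vdot.
    rewrite (map_ext _ (fun k => u k ^ 2 + (2 * (u k * v k) + v k ^ 2))) by (intros; ring).
    rewrite !sumR_map_plus, sumR_map_scal. ring. }
  pose proof (vdot_le_vnorm u v). pose proof (vnorm_ge0 u). pose proof (vnorm_ge0 v).
  pose proof (vnorm_ge0 (fun k => u k + v k)).
  nra.
Qed.

Lemma vnorm_vsub_triangle (a b c : nat -> R) :
  vnorm d (vsub a c) <= vnorm d (vsub a b) + vnorm d (vsub b c).
Proof.
  rewrite (vnorm_ext (vsub a c) (fun k => vsub a b k + vsub b c k)) by (intros; unfold vsub; ring).
  apply vnorm_add.
Qed.

Lemma vnorm_vsub_sym (a b : nat -> R) : vnorm d (vsub a b) = vnorm d (vsub b a).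
Proof.
  rewrite (vnorm_ext (vsub a b) (fun k => -1 * vsub b a k)) by (intros; unfold vsub; ring).
  rewrite vnorm_scal, Rabs_left by lra. ring.
Qed.

Lemma vnorm_vsub_le (a b : nat -> R) : vnorm d (vsub a b) <= vnorm d a + vnorm d b.
Proof.
  rewrite (vnorm_ext (vsub a b) (fun k => a k + -1 * b k)) by (intros; unfold vsub; ring).
  eapply Rle_trans; [apply vnorm_add|].
  rewrite vnorm_scal, Rabs_left by lra. lra.
Qed.

Lemma vnorm_vsub_diag (a : nat -> R) : vnorm d (vsub a a) = 0.
Proof. apply vnorm_zero. intros; unfold vsub; ring. Qed.

Lemma vnorm_sumR_le {A : Type} (J : list A) (w : A -> R) (v : A -> nat -> R) :
  vnorm d (fun k => sumR (map (fun j => w j * v j k) J)) <=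
  sumR (map (fun j => Rabs (w j) * vnorm d (v j)) J).
Proof.
  induction J as [|j J IH]; simpl.
  - rewrite vnorm_zero; auto; lra.
  - eapply Rle_trans; [apply (vnorm_add (fun k => w j * v j k))|].
    rewrite vnorm_scal. lra.
Qed.

End EuclideanNorm.

Lemma is_derive_sumR (l : list nat) (h dh : nat -> R -> R) (r : R) :
  (forall k, In k l -> is_derive (h k) r (dh k r)) ->
  is_derive (fun t => sumR (map (fun k => h k t) l)) r (sumR (map (fun k => dh k r) l)).
Proof.
  induction l as [|a l IH]; intros H; simpl.
  - apply (is_derive_const (K := R_AbsRing) 0).
  - apply (is_derive_plus (h a) (fun t => sumR (map (fun k => h k t) l)));
      [apply H; simpl; auto|apply IH; intros; apply H; simpl; auto].
Qed.

Lemma continuity_pt_sumR (l : list nat) (h : nat -> R -> R) (r : R) :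
  (forall k, In k l -> continuity_pt (h k) r) ->
  continuity_pt (fun t => sumR (map (fun k => h k t) l)) r.
Proof.
  induction l as [|a l IH]; intros H; simpl.
  - apply continuity_pt_const. intros ? ?; reflexivity.
  - apply (continuity_pt_plus (h a) (fun t => sumR (map (fun k => h k t) l)));
      [apply H; simpl; auto|apply IH; intros; apply H; simpl; auto].
Qed.

(* Mean value theorem applied to t |-> <f a - f c, f t>. *)
Lemma vnorm_mvt (d : nat) (f D : R -> nat -> R) (c a L : R) :
  c < a ->
  (forall r k, c < r < a -> (k < d)%nat -> is_derive (fun u => f u k) r (D r k)) ->
  (forall r k, c <= r <= a -> (k < d)%nat -> continuity_pt (fun u => f u k) r) ->
  (forall r, c <= r <= a -> vnorm d (D r) <= L) ->
  vnorm d (vsub (f a) (f c)) <= (a - c) * L.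
Proof.
  intros Hca Hder Hcont HL.
  set (u := vsub (f a) (f c)).
  set (g := fun t => sumR (map (fun k => u k * f t k) (seq 0 d))).
  destruct (MVT_gen g c a (fun r => vdot d u (D r))) as [xi [Hxi Heq]].
  - intros r Hr. rewrite Rmin_left, Rmax_right in Hr by lra.
    apply (is_derive_sumR _ (fun k t => u k * f t k) (fun k r => u k * D r k)).
    intros k Hk. apply in_seq in Hk. apply is_derive_scal, Hder; lia || lra.
  - intros r Hr. rewrite Rmin_left, Rmax_right in Hr by lra.
    apply (continuity_pt_sumR _ (fun k t => u k * f t k)). intros k Hk. apply in_seq in Hk.
    apply continuity_pt_mult; [apply continuity_pt_const; intros ? ?; reflexivity|].
    apply Hcont; lia || lra.
  - rewrite Rmin_left, Rmax_right in Hxi by lra.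
    assert (Hg : g a - g c = vnorm d u * vnorm d u).
    { rewrite vnorm_sqr. unfold g. rewrite <- sumR_map_minus.
      f_equal. apply map_ext. intros k. unfold u, vsub. ring. }
    assert (Hdot : vdot d u (D xi) <= vnorm d u * L).
    { eapply Rle_trans; [apply vdot_le_vnorm|].
      apply Rmult_le_compat_l; [apply vnorm_ge0|apply HL; lra]. }
    pose proof (vnorm_ge0 d u).
    assert (0 <= L) by (eapply Rle_trans; [apply (vnorm_ge0 d (D c))|apply HL; lra]).
    assert (vnorm d u * vnorm d u <= vnorm d u * ((a - c) * L)) by (rewrite <- Hg, Heq; nra).
    destruct (Req_dec (vnorm d u) 0) as [Z|Z]; [rewrite Z; nra|].
    apply (Rmult_le_reg_l (vnorm d u)); lra.
Qed.

(* Coquelicot's combinators are stated for the abstract [plus]/[mult] and do not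
   unify with [Rplus]/[Rmult] under [apply]; these are their instances on R. *)
Lemma continuous_Rplus (f g : R -> R) (t : R) :
  continuous f t -> continuous g t -> continuous (fun u => f u + g u) t.
Proof. exact (continuous_plus f g t). Qed.

Lemma continuous_Rminus (f g : R -> R) (t : R) :
  continuous f t -> continuous g t -> continuous (fun u => f u - g u) t.
Proof. exact (continuous_minus f g t). Qed.

Lemma continuous_Rmult (f g : R -> R) (t : R) :
  continuous f t -> continuous g t -> continuous (fun u => f u * g u) t.
Proof. exact (continuous_mult f g t). Qed.

Lemma continuous_Rmax (f g : R -> R) (t : R) :
  continuous f t -> continuous g t -> continuous (fun u => Rmax (f u) (g u)) t.
Proof.
  intros Hf Hg.
  apply (continuous_ext (fun u => (f u + g u + Rabs (f u - g u)) * / 2)).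
  { intros u. unfold Rmax. destruct Rle_dec; [rewrite Rabs_left1|rewrite Rabs_right]; lra. }
  apply continuous_Rmult; [|apply continuous_const].
  apply continuous_Rplus; [apply continuous_Rplus; auto|].
  apply (continuous_Rabs_comp (fun u => f u - g u)), continuous_Rminus; auto.
Qed.

Lemma continuous_sumR (l : list nat) (h : nat -> R -> R) (t : R) :
  (forall k, In k l -> continuous (h k) t) ->
  continuous (fun u => sumR (map (fun k => h k u) l)) t.
Proof.
  induction l as [|a l IH]; intros H; simpl; [apply continuous_const|].
  apply (continuous_Rplus (h a) (fun u => sumR (map (fun k => h k u) l)));
    [apply H; simpl; auto|apply IH; intros; apply H; simpl; auto].
Qed.

Lemma continuous_maxl (l : list nat) (h : nat -> R -> R) (t : R) :
  (forall k, In k l -> continuous (h k) t) ->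
  continuous (fun u => maxl (map (fun k => h k u) l)) t.
Proof.
  induction l as [|a l IH]; intros H; simpl; [apply continuous_const|].
  apply (continuous_Rmax (h a) (fun u => maxl (map (fun k => h k u) l)));
    [apply H; simpl; auto|apply IH; intros; apply H; simpl; auto].
Qed.

Lemma continuous_vnorm (d : nat) (v : R -> nat -> R) (t : R) :
  (forall k, (k < d)%nat -> continuous (fun u => v u k) t) ->
  continuous (fun u => vnorm d (v u)) t.
Proof.
  intros H. apply (continuous_sqrt_comp (fun u => sumR (map (fun k => v u k ^ 2) (seq 0 d)))).
  apply (continuous_sumR _ (fun k u => v u k ^ 2)). intros k Hk. apply in_seq in Hk.
  apply (continuous_ext (fun u => v u k * v u k)); [intros u; simpl; lra|].
  apply continuous_Rmult; apply H; lia.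
Qed.

Lemma continuous_comp_within (f g : R -> R) (D : R -> Prop) (t : R) :
  continuous f t -> (forall u, D (f u)) ->
  filterlim g (within D (locally (f t))) (locally (g (f t))) ->
  continuous (fun u => g (f u)) t.
Proof.
  intros Hf HD Hg. eapply filterlim_comp; [|exact Hg].
  intros P HP. unfold filtermap.
  apply (filter_imp (fun u => D (f u) -> P (f u))); [intros u Hu; apply Hu, HD|].
  exact (Hf _ HP).
Qed.

Lemma ex_derive_Rcontinuous (f : R -> R) (t : R) : ex_derive f t -> continuous f t.
Proof. exact (ex_derive_continuous f t). Qed.

Lemma Zsig_ge_pow (sigma : R) (k : nat) : 0 <= sigma -> (1 + 2 * sigma) ^ k <= Zsig sigma k.
Proof.
  intros Hs. unfold Zsig.
  enough (H : 0 <= fst (Zpair sigma k) <= snd (Zpair sigma k) /\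
              (1 + 2 * sigma) ^ k <= fst (Zpair sigma k)) by apply H.
  induction k as [|k IH]; simpl; [lra|].
  destruct (Zpair sigma k) as [z s]. simpl in *. nra.
Qed.

Lemma exp_weight_le (t T : R) : 0 <= t <= T ->
  1 - (1 + t) * exp (- t) <= 1 - (1 + T) * exp (- T).
Proof.
  intros Ht.
  assert (H1 := exp_ineq1_le (T - t)).
  assert (H2 : exp (- t) = exp (T - t) * exp (- T)) by (rewrite <- exp_plus; f_equal; ring).
  assert (0 < exp (- T)) by apply exp_pos.
  assert (1 + T <= (1 + t) * exp (T - t)) by nra.
  rewrite H2. nra.
Qed.

Lemma exp_weight_ge0 (t : R) : 0 <= t -> 0 <= 1 - (1 + t) * exp (- t).
Proof.
  intros Ht. pose proof (exp_weight_le 0 t ltac:(lra)) as Hw.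
  rewrite Rplus_0_r, Ropp_0, exp_0 in Hw. lra.
Qed.

Lemma RInt_exp_kernel (t B : R) :
  RInt (fun s => exp (- (t - s)) * ((t - s) * B)) 0 t = B * (1 - (1 + t) * exp (- t)).
Proof.
  apply is_RInt_unique.
  replace (B * (1 - (1 + t) * exp (- t))) with
    (minus (B * ((1 + t - t) * exp (- (t - t)))) (B * ((1 + t - 0) * exp (- (t - 0))))).
  - apply (is_RInt_derive (fun s => B * ((1 + t - s) * exp (- (t - s))))).
    + intros s _. auto_derive; auto. replace (t + - s) with (t - s) by ring. ring.
    + intros s _. apply ex_derive_Rcontinuous. auto_derive. auto.
  - unfold minus, plus, opp; simpl.
    replace (- (t - t)) with 0 by ring. replace (- (t - 0)) with (- t) by ring.
    rewrite exp_0. ring.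
Qed.

(* V stands for the maximal speed, known only on (0, t); the continuous W it agrees
   with there makes both integrals exist. *)
Lemma RInt_memory_le (V W : R -> R) (t B : R) :
  0 <= t ->
  (forall z, continuous W z) ->
  (forall r, 0 < r < t -> V r = W r) ->
  (forall r, 0 <= r <= t -> W r <= B) ->
  RInt (fun s => exp (- (t - s)) * RInt V s t) 0 t <= B * (1 - (1 + t) * exp (- t)).
Proof.
  intros Ht HW HVW HB.
  assert (HWint : forall a b, ex_RInt W a b)
    by (intros; apply (@ex_RInt_continuous R_CompleteNormedModule); auto).
  rewrite <- RInt_exp_kernel.
  rewrite (RInt_ext _ (fun s => exp (- (t - s)) * RInt W s t)).
  2:{ intros s Hs. rewrite Rmin_left, Rmax_right in Hs by lra.
      f_equal. apply RInt_ext. intros r Hr. rewrite Rmin_left, Rmax_right in Hr by lra.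
      apply HVW. lra. }
  apply RInt_le; [exact Ht| | |].
  - apply (@ex_RInt_continuous R_CompleteNormedModule). intros z _.
    apply (continuous_Rmult (fun s => exp (- (t - s)))).
    + apply ex_derive_Rcontinuous. auto_derive. auto.
    + apply (continuous_RInt_2 W z t), filter_forall.
      intros; apply (@RInt_correct R_CompleteNormedModule); auto.
  - apply (@ex_RInt_continuous R_CompleteNormedModule). intros z _.
    apply ex_derive_Rcontinuous. auto_derive. auto.
  - intros s Hs. apply Rmult_le_compat_l; [left; apply exp_pos|].
    replace ((t - s) * B) with (RInt (fun _ => B) s t) by (rewrite RInt_const; reflexivity).
    apply RInt_le; auto; [lra|apply ex_RInt_const|].
    intros r Hr. apply HB. lra.
Qed.

Lemma in_agents (N j : nat) : In j (agents N) <-> (1 <= j <= N)%nat.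
Proof. unfold agents. rewrite in_seq. lia. Qed.

Lemma length_filter_neq_lt (l : list nat) (i : nat) :
  In i l -> (length (filter (fun j => negb (Nat.eqb j i)) l) < length l)%nat.
Proof.
  intros Hi. pose proof (filter_length_le (fun j => negb (Nat.eqb j i)) l).
  destruct (Nat.eq_dec (length (filter (fun j => negb (Nat.eqb j i)) l)) (length l)) as [E|E];
    [|lia].
  apply filter_length_forallb in E. rewrite forallb_forall in E. specialize (E i Hi).
  rewrite Nat.eqb_refl in E. discriminate.
Qed.

Section DelayedConsensus.

Variables (N d : nat) (psi : R -> R) (sigma tau : R) (x : config).
Hypothesis HN : (2 <= N)%nat.
Hypothesis Hpsi : psi_ok psi.
Hypothesis Hsol : is_solution N d psi sigma tau x.
Hypothesis Hsigma : 0 <= sigma.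
Hypothesis Hst : sigma <= tau.

Lemma rhs_vnorm_le (i : nat) (r B : R) :
  (1 <= i <= N)%nat -> 0 <= B ->
  (forall j, (1 <= j <= N)%nat -> vnorm d (vsub (x j (r - tau)) (x i (r - sigma))) <= B) ->
  vnorm d (rhs N d psi sigma tau x i r) <= B.
Proof.
  intros Hi HB Hj.
  destruct Hpsi as (_ & _ & Hpos & Hle1).
  set (J := filter (fun j => negb (Nat.eqb j i)) (agents N)).
  assert (HJ : (length J <= N - 1)%nat).
  { pose proof (length_filter_neq_lt (agents N) i (proj2 (in_agents N i) Hi)) as Hlt.
    fold J in Hlt. unfold agents in Hlt. rewrite length_seq in Hlt. lia. }
  assert (HN1 : 0 < INR (N - 1)) by (apply lt_0_INR; lia).
  eapply Rle_trans;
    [apply (vnorm_sumR_le d J (fun j => aw N d psi sigma tau x i j r)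
                               (fun j => vsub (x j (r - tau)) (x i (r - sigma))))|].
  eapply Rle_trans; [apply (sumR_map_le_length J _ (B / INR (N - 1)))|].
  - intros j HjJ. apply filter_In in HjJ. destruct HjJ as [HjN _]. apply in_agents in HjN.
    unfold aw. set (p := psi _).
    assert (0 < p /\ p <= 1) as [Hp0 Hp1] by (split; [apply Hpos|apply Hle1]; apply sqrt_pos).
    rewrite Rabs_right by (apply Rle_ge, Rdiv_le_0_compat; lra).
    unfold Rdiv. rewrite (Rmult_comm B), (Rmult_comm p), Rmult_assoc.
    apply Rmult_le_compat_l; [left; apply Rinv_0_lt_compat; lra|].
    pose proof (Hj j HjN). pose proof (vnorm_ge0 d (vsub (x j (r - tau)) (x i (r - sigma)))).
    nra.
  - replace B with (INR (N - 1) * (B / INR (N - 1))) at 2 by (field; lra).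
    apply Rmult_le_compat_r; [apply Rdiv_le_0_compat; lra|apply le_INR, HJ].
Qed.

(* The solution continued to the left of -tau by its value at -tau; unlike x, it is
   continuous at -tau from both sides. *)
Definition xext : config := fun i u k => x i (Rmax u (- tau)) k.

Lemma xext_continuous (i k : nat) (t : R) :
  (1 <= i <= N)%nat -> (k < d)%nat -> continuous (fun u => xext i u k) t.
Proof.
  intros Hi Hk. unfold xext.
  apply (continuous_comp_within (fun u => Rmax u (- tau)) (fun v => x i v k) (fun v => - tau <= v)).
  - apply continuous_Rmax; [apply continuous_id|apply continuous_const].
  - intros; apply Rmax_r.
  - apply (proj1 Hsol); auto. apply Rmax_r.
Qed.

Lemma x_continuity_pt (i k : nat) (t : R) :
  (1 <= i <= N)%nat -> (k < d)%nat -> - tau < t -> continuity_pt (fun u => x i u k) t.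
Proof.
  intros Hi Hk Ht. apply continuity_pt_filterlim. change (continuous (fun u => x i u k) t).
  apply (continuous_ext_loc _ (fun u => xext i u k)); [|apply xext_continuous; auto].
  apply (filter_imp (fun u => - tau < u)); [|exact (open_gt (- tau) t Ht)].
  intros u Hu. unfold xext. rewrite Rmax_left; lra.
Qed.

Lemma rhs_xext (i : nat) (r : R) :
  0 <= r -> rhs N d psi sigma tau xext i r = rhs N d psi sigma tau x i r.
Proof.
  intros Hr. unfold rhs, aw, xext.
  rewrite (Rmax_left (r - tau)), (Rmax_left (r - sigma)) by lra.
  reflexivity.
Qed.

Definition window_diam_le (b M : R) : Prop :=
  forall i j s s', (1 <= i <= N)%nat -> (1 <= j <= N)%nat ->
    - tau <= s <= b -> - tau <= s' <= b -> vnorm d (vsub (x i s) (x j s')) <= M.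

Lemma Delta0_window : 0 <= Delta0 N d tau x /\ window_diam_le 0 (Delta0 N d tau x).
Proof.
  assert (Htau : 0 <= tau) by lra.
  set (m := fun s => maxl (map (fun i => vnorm d (xext i s)) (agents N))).
  destruct (continuity_ab_maj m (- tau) 0) as [s0 [Hs0 _]]; [lra| |].
  { intros c _. apply continuity_pt_filterlim, continuous_maxl.
    intros i Hi. apply in_agents in Hi.
    apply (continuous_vnorm d (fun u => xext i u)). intros; apply xext_continuous; auto. }
  assert (Hx : forall i s, (1 <= i <= N)%nat -> - tau <= s <= 0 -> vnorm d (x i s) <= m s0).
  { intros i s Hi Hs. eapply Rle_trans; [|apply (Hs0 s Hs)].
    replace (x i s) with (xext i s) by (unfold xext; rewrite Rmax_left by lra; reflexivity).
    apply maxl_ub, in_map_iff. exists i. split; [reflexivity|apply in_agents; exact Hi]. }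
  set (E := fun r => exists i j s t, (1 <= i <= N)%nat /\ (1 <= j <= N)%nat /\
              - tau <= s <= 0 /\ - tau <= t <= 0 /\ r = vnorm d (vsub (x i s) (x j t))).
  assert (HE : forall r, E r -> r <= 2 * m s0).
  { intros r (i & j & s & t & Hi & Hj & Hs & Ht & ->).
    eapply Rle_trans; [apply vnorm_vsub_le|].
    pose proof (Hx i s Hi Hs). pose proof (Hx j t Hj Ht). lra. }
  assert (HE0 : E 0).
  { exists 1%nat, 1%nat, 0, 0. rewrite vnorm_vsub_diag. repeat split; lia || lra. }
  destruct (Lub_Rbar_correct E) as [Hub Hlub].
  unfold Delta0, window_diam_le. fold E.
  destruct (Lub_Rbar E) as [l| |]; simpl in *.
  - split; [exact (Hub 0 HE0)|].
    intros i j s s' Hi Hj Hs Hs'. apply Hub. exists i, j, s, s'. repeat split; lia || lra.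
  - exact (False_ind _ (Hlub (2 * m s0) HE)).
  - exact (False_ind _ (Hub 0 HE0)).
Qed.

Lemma window_speed_le (b M : R) (i : nat) (r : R) :
  window_diam_le b M -> 0 <= M -> (1 <= i <= N)%nat -> 0 <= r <= b + sigma ->
  vnorm d (rhs N d psi sigma tau x i r) <= M.
Proof.
  intros Hwin HM Hi Hr. apply rhs_vnorm_le; auto.
  intros j Hj. apply Hwin; auto; lra.
Qed.

Lemma window_displacement_le (b M : R) (i : nat) (a : R) :
  window_diam_le b M -> 0 <= M -> 0 <= b -> (1 <= i <= N)%nat -> b <= a <= b + sigma ->
  vnorm d (vsub (x i a) (x i b)) <= sigma * M.
Proof.
  intros Hwin HM Hb Hi Ha.
  destruct (Req_dec a b) as [->|Hab]; [rewrite vnorm_vsub_diag; nra|].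
  eapply Rle_trans; [apply (vnorm_mvt d (x i) (rhs N d psi sigma tau x i) b a M)|].
  - lra.
  - intros r k Hr Hk. apply (proj2 Hsol); auto; lra.
  - intros r k Hr Hk. apply x_continuity_pt; auto; lra.
  - intros r Hr. apply (window_speed_le b); auto; lra.
  - apply Rmult_le_compat_r; lra.
Qed.

Lemma window_diam_step (b M : R) :
  window_diam_le b M -> 0 <= M -> 0 <= b -> window_diam_le (b + sigma) ((1 + 2 * sigma) * M).
Proof.
  intros Hwin HM Hb.
  assert (Hback : forall i s, (1 <= i <= N)%nat -> - tau <= s <= b + sigma ->
                    vnorm d (vsub (x i (Rmin s b)) (x i s)) <= sigma * M).
  { intros i s Hi Hs. rewrite vnorm_vsub_sym. unfold Rmin. destruct (Rle_dec s b).
    - rewrite vnorm_vsub_diag. nra.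
    - apply (window_displacement_le b); auto; lra. }
  assert (Hmin : forall s, - tau <= s -> - tau <= Rmin s b <= b)
    by (intros; split; [apply Rmin_glb|apply Rmin_r]; lra).
  intros i j s s' Hi Hj Hs Hs'.
  assert (Hmid : vnorm d (vsub (x i (Rmin s b)) (x j (Rmin s' b))) <= M)
    by (apply Hwin; auto; apply Hmin; lra).
  pose proof (Hback i s Hi Hs) as Hi_back. pose proof (Hback j s' Hj Hs') as Hj_back.
  rewrite vnorm_vsub_sym in Hi_back.
  eapply Rle_trans; [apply (vnorm_vsub_triangle d _ (x i (Rmin s b)))|].
  eapply Rle_trans; [apply Rplus_le_compat_l, (vnorm_vsub_triangle d _ (x j (Rmin s' b)))|].
  lra.
Qed.

Lemma window_diam_pow (D : R) :
  window_diam_le 0 D -> 0 <= D ->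
  forall k, window_diam_le (INR k * sigma) ((1 + 2 * sigma) ^ k * D).
Proof.
  intros H0 HD k. induction k as [|k IH].
  - simpl. rewrite Rmult_0_l, Rmult_1_l. exact H0.
  - rewrite S_INR, Rmult_plus_distr_r, Rmult_1_l, <- tech_pow_Rmult, Rmult_assoc.
    apply window_diam_step; auto.
    + apply Rmult_le_pos; [apply pow_le|]; lra.
    + apply Rmult_le_pos; [apply pos_INR|lra].
Qed.

Lemma diam_le_window (b M t : R) :
  window_diam_le b M -> 0 <= M -> - tau <= t <= b -> diam N d x t <= M.
Proof.
  intros Hwin HM Ht. unfold diam.
  apply maxl_lub; auto. intros y Hy. apply in_map_iff in Hy. destruct Hy as (i & <- & Hi).
  apply maxl_lub; auto. intros z Hz. apply in_map_iff in Hz. destruct Hz as (j & <- & Hj).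
  apply in_agents in Hi, Hj. apply Hwin; auto.
Qed.

Definition speed_ext (r : R) : R :=
  maxl (map (fun i => vnorm d (rhs N d psi sigma tau xext i r)) (agents N)).

Lemma speed_ext_continuous (z : R) : continuous speed_ext z.
Proof.
  assert (Hshift : forall m v c, (1 <= m <= N)%nat -> (v < d)%nat ->
                     continuous (fun u => xext m (u - c) v) z).
  { intros m v c Hm Hv. apply (continuous_comp (fun u => u - c) (fun w => xext m w v)).
    - apply continuous_Rminus; [apply continuous_id|apply continuous_const].
    - apply xext_continuous; auto. }
  apply continuous_maxl. intros i Hi. apply in_agents in Hi.
  apply (continuous_vnorm d (rhs N d psi sigma tau xext i)). intros k Hk.
  apply continuous_sumR. intros j Hj. apply filter_In in Hj. destruct Hj as [Hj _].
  apply in_agents in Hj. unfold aw.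
  apply continuous_Rmult; [apply continuous_Rmult; [|apply continuous_const]|].
  - apply (continuous_comp_within
             (fun u => vnorm d (vsub (xext i (u - sigma)) (xext j (u - tau))))
             psi (fun v => 0 <= v)).
    + apply continuous_vnorm. intros v Hv. apply continuous_Rminus; auto.
    + intros; apply sqrt_pos.
    + apply (proj1 Hpsi), sqrt_pos.
  - apply continuous_Rminus; auto.
Qed.

Lemma memory_le (b M t : R) :
  window_diam_le b M -> 0 <= M -> 0 <= t <= b + sigma ->
  RInt (fun s => exp (- (t - s)) *
          RInt (fun r => maxl (map (fun i => vnorm d (vel x i r)) (agents N))) s t) 0 t
  <= M * (1 - (1 + t) * exp (- t)).
Proof.
  intros Hwin HM Ht. apply (RInt_memory_le _ speed_ext); [lra|apply speed_ext_continuous| |].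
  - intros r Hr. unfold speed_ext. f_equal. apply map_ext_in. intros i Hi. apply in_agents in Hi.
    rewrite rhs_xext by lra. apply vnorm_ext. intros k Hk.
    apply is_derive_unique, (proj2 Hsol); auto; lra.
  - intros r Hr. apply maxl_lub; auto. intros y Hy. apply in_map_iff in Hy.
    destruct Hy as (i & <- & Hi). apply in_agents in Hi.
    rewrite rhs_xext by lra. apply (window_speed_le b); auto; lra.
Qed.

End DelayedConsensus.

Theorem lemma3p7 (N d : nat) (sigma tau beta : R) (psi : R -> R)
  (x : config) (K : nat) :
  (2 <= N)%nat -> (1 <= d)%nat ->
  0 <= sigma -> sigma <= tau ->
  psi_ok psi ->
  is_solution N d psi sigma tau x ->
  0 < beta ->
  (* K is the smallest integer with K*sigma >= 2 tau *)
  INR K * sigma >= 2 * tau ->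
  (forall k : nat, INR k * sigma >= 2 * tau -> (K <= k)%nat) ->
  forall t, 0 <= t <= 2 * tau ->
    Ffun N d beta tau x t <=
      (Zsig sigma K + Zsig sigma (K - 1) * beta * (1 - (1 + 2 * tau) * exp (- (2 * tau))))
      * Delta0 N d tau x.
Proof.
  intros HN _ Hs Hst Hpsi Hsol Hb HK _ t Ht.
  destruct (Delta0_window N d psi sigma tau x HN Hsol Hs Hst) as [HD Hwin0].
  set (D := Delta0 N d tau x) in *.
  pose proof (window_diam_pow N d psi sigma tau x HN Hpsi Hsol Hs Hst D Hwin0 HD) as Hwin.
  assert (Hpow : forall k, 0 <= (1 + 2 * sigma) ^ k * D)
    by (intros; apply Rmult_le_pos; [apply pow_le|]; lra).
  assert (HKK : INR K * sigma <= INR (K - 1) * sigma + sigma).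
  { destruct K as [|K']; [simpl; lra|].
    replace (S K' - 1)%nat with K' by lia. rewrite S_INR. lra. }
  unfold Ffun. rewrite Rmax_left by lra.
  pose proof (diam_le_window N d tau x _ _ t (Hwin K) (Hpow K) ltac:(lra)) as Hdiam.
  pose proof (memory_le N d psi sigma tau x HN Hpsi Hsol Hst _ _ t (Hwin (K - 1)%nat)
                (Hpow (K - 1)%nat) ltac:(lra)) as Hmem.
  set (I := RInt _ 0 t) in *.
  assert (HI : I <= Zsig sigma (K - 1) * D * (1 - (1 + 2 * tau) * exp (- (2 * tau)))).
  { eapply Rle_trans; [exact Hmem|]. apply Rmult_le_compat.
    - apply Hpow.
    - apply exp_weight_ge0. lra.
    - apply Rmult_le_compat_r, Zsig_ge_pow; auto.
    - apply exp_weight_le. lra. }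
  pose proof (Rmult_le_compat_r D _ _ HD (Zsig_ge_pow sigma K Hs)).
  nra.
Qed.
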